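(* Let $f : 2^N \to \mathbb{R}_{\ge 0}$ be a non-negative submodular function, let $r \ge 1$ be an integer, $\alpha \in [0,1]$ and $v^\star \in \mathbb{R}$. Consider a randomized procedure with $S_0 = \emptyset$ and $S_i = S_{i-1} \cup T_i$ for $i = 1,\dots,r$, where $T_i$ is a random set (returned by the subroutine SIEVE at iteration $i$ of BLITS). Assume that for every $i \in \{1,\dots,r\}$, given the current solution $S_{i-1}$, the returned set satisfies $$\mathbb{E}\left[f_{S_{i-1}}(T_i)\right] \ge \frac{\alpha}{r}\left(\left(1-\frac{1}{r}\right)^{i-1} v^\star - f(S_{i-1})\right).$$ Then $\mathbb{E}[f(S_r)] \ge \frac{\alpha}{e}\, v^\star$.
   Context: For sets $S,T \subseteq N$, $f_S(T) = f(S\cup T) - f(S)$. $f$ is submodular if $f(S\cup\{a\}) - f(S) \ge f(T\cup\{a\}) - f(T)$ whenever $S\subseteq T$ and $a\notin T$. BLITS is the algorithm that starts with $S=\emptyset$ and for $r$ iterations adds to $S$ a block returned by a subroutine called SIEVE. *)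

From HB Require Import structures.
From mathcomp Require Import all_boot all_order all_algebra.
From mathcomp Require Import all_classical all_reals all_analysis.
Set Implicit Arguments. Unset Strict Implicit. Unset Printing Implicit Defensive.
Import Order.TTheory GRing.Theory Num.Theory.
Local Open Scope ring_scope.

Definition marginal (R : numDomainType) (N : finType) (f : {set N} -> R)
  (S T : {set N}) : R := f (S :|: T) - f S.

Definition submodular (R : numDomainType) (N : finType) (f : {set N} -> R) : Prop :=
  forall (S T : {set N}) (a : N), S \subset T -> a \notin T ->
    f (a |: T) - f T <= f (a |: S) - f S.

Fixpoint blits_sol (N : finType) (Omega : Type) (T : nat -> Omega -> {set N})
  (i : nat) (w : Omega) : {set N} :=
  match i with
  | 0 => finset.set0
  | i'.+1 => blits_sol T i' w :|: T i'.+1 w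
  end.

From HB Require Import structures.
From mathcomp Require Import all_boot all_order all_algebra.
From mathcomp Require Import all_classical all_reals all_analysis.
From mathcomp Require Import ring lra.
Set Implicit Arguments. Unset Strict Implicit. Unset Printing Implicit Defensive.
Import Order.TTheory GRing.Theory Num.Theory.
Local Open Scope classical_set_scope.
Local Open Scope ring_scope.

(* Let a_j = E[f(S_j)].  Every S_j and T_j takes finitely many values, so
   summing the hypothesis over the values A of S_j is the law of total
   expectation and yields a_{j+1} - a_j >= (alpha/r) ((1 - 1/r)^j v - a_j).
   As 1 - alpha/r >= 1 - 1/r, induction on this recurrence gives
   a_j >= j (alpha/r) (1 - 1/r)^(j-1) v, so a_r >= alpha (1 - 1/r)^(r-1) v,
   and (1 - 1/r)^(r-1) >= 1/e.  When v < 0 the bound follows from a_r >= 0. *)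

Section FiniteValuedRandomVariables.
Context {R : realType} {d : measure_display} {Omega : measurableType d}.

Definition measurable_fibers {K : Type} (X : Omega -> K) : Prop :=
  forall k, measurable (X @^-1` [set k]).

Lemma measurable_fibers_preimage (K : finType) (X : Omega -> K) (Y : set K) :
  measurable_fibers X -> measurable (X @^-1` Y).
Proof.
move=> mX; have -> : X @^-1` Y = \bigcup_(k in Y) X @^-1` [set k].
  apply/seteqP; split => [w Yw|w [k Yk /= Xk]]; first by exists (X w).
  by rewrite /preimage /= Xk.
by apply: fin_bigcup_measurable => //; exact: finite_finset.
Qed.

Lemma measurable_fibers_comp (K L : finType) (g : K -> L) (X : Omega -> K) :
  measurable_fibers X -> measurable_fibers (g \o X).
Proof.
by move=> mX l; rewrite comp_preimage; exact: measurable_fibers_preimage.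
Qed.

Lemma measurable_fibers_pair (K L : Type) (X : Omega -> K) (Y : Omega -> L) :
  measurable_fibers X -> measurable_fibers Y ->
  measurable_fibers (fun w => (X w, Y w)).
Proof.
move=> mX mY [k l].
have -> : (fun w => (X w, Y w)) @^-1` [set (k, l)] =
    X @^-1` [set k] `&` Y @^-1` [set l].
  by apply/seteqP; split => w /= => [[-> ->]|[-> ->]].
exact: measurableI.
Qed.

Lemma measurable_fibers_cst (K : Type) (k0 : K) :
  measurable_fibers (fun _ : Omega => k0).
Proof. by move=> k; rewrite (preimage_cst k0); case: ifP. Qed.

Variable P : probability Omega R.

Definition law {K : Type} (X : Omega -> K) (k : K) : R :=
  fine (P (X @^-1` [set k])).

Section FixedVariable.
Variables (K : finType) (X : Omega -> K).
Hypothesis mX : measurable_fibers X.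

Lemma integral_fin_valued_on (h : K -> R) (D : set Omega) : measurable D ->
  (\int[P]_(w in D) (h (X w))%:E =
   (\sum_k h k * fine (P (D `&` X @^-1` [set k])))%:E)%E.
Proof.
move=> mD.
have intI k : P.-integrable D (EFin \o \1_(X @^-1` [set k])).
  apply: (integrableS measurableT) => //; exact: integrable_indic.
transitivity (\int[P]_(w in D)
    (\sum_k (h k)%:E * (\1_(X @^-1` [set k]) w)%:E))%E.
  apply: eq_integral => w _.
  rewrite (bigD1 (X w)) //= indicE mem_set // mule1 big1 ?adde0 // => k Xwk.
  by rewrite indicE memNset ?mule0 // => Xw; rewrite Xw eqxx in Xwk.
rewrite integral_sum //; last first.
  by move=> k; apply: integrableZl => //; exact: intI.
rewrite -sumEFin; apply: eq_bigr => k _.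
rewrite integralZl //; last exact: intI.
rewrite integral_indic // setIC EFinM fineK //.
exact/fin_num_measure/measurableI.
Qed.

Lemma integral_fin_valued (h : K -> R) :
  (\int[P]_w (h (X w))%:E = (\sum_k h k * law X k)%:E)%E.
Proof.
rewrite integral_fin_valued_on //; congr (_%:E); apply: eq_bigr => k _.
by rewrite setTI.
Qed.

Lemma integral_fin_valued_fiber (I : finType) (phi : K -> I) (A : I)
    (h : K -> R) :
  (\int[P]_(w in [set w | phi (X w) = A]) (h (X w))%:E =
   (\sum_(k | phi k == A) h k * law X k)%:E)%E.
Proof.
rewrite integral_fin_valued_on; last first.
  exact: (measurable_fibers_preimage (phi @^-1` [set A])).
congr (_%:E); rewrite [RHS]big_mkcond; apply: eq_bigr => k _.
have [<-|phikA] := eqVneq (phi k) A.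
  congr (_ * fine (P _)); apply/seteqP; split => [w [] //|w /= Xwk].
  by rewrite Xwk.
have -> : [set w | phi (X w) = A] `&` X @^-1` [set k] = set0.
  apply/seteqP; split => // w /= [phiXwA Xwk].
  by rewrite -Xwk phiXwA eqxx in phikA.
by rewrite measure0 mulr0.
Qed.

Lemma measure_fin_valued_fiber (I : finType) (phi : K -> I) (A : I) :
  P [set w | phi (X w) = A] = (\sum_(k | phi k == A) law X k)%:E.
Proof.
have mA : measurable [set w | phi (X w) = A].
  exact: (measurable_fibers_preimage (phi @^-1` [set A])).
rewrite -[LHS]mul1e -(integral_cst P mA).
rewrite (integral_fin_valued_fiber phi A (fun=> 1)).
by congr (_%:E); apply: eq_bigr => k _; rewrite mul1r.
Qed.

Lemma sum_law : \sum_k law X k = 1.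
Proof.
apply: EFin_inj; rewrite -[RHS](probability_setT P) -[RHS]mul1e.
rewrite -(integral_cst P measurableT) (integral_fin_valued (fun=> 1)).
by congr (_%:E); apply: eq_bigr => k _; rewrite mul1r.
Qed.

Lemma le_expectation_of_conditional (I : finType) (phi : K -> I)
    (c : I -> R) (m : K -> R) :
  (forall A, (P [set w | phi (X w) = A] * (c A)%:E <=
     \int[P]_(w in [set w | phi (X w) = A]) (m (X w))%:E)%E) ->
  \sum_k c (phi k) * law X k <= \sum_k m k * law X k.
Proof.
move=> condX; rewrite !(partition_big phi xpredT) //=.
apply: ler_sum => A _; have := condX A.
rewrite measure_fin_valued_fiber integral_fin_valued_fiber -EFinM lee_fin.
suff -> : \sum_(k | phi k == A) c (phi k) * law X k =
          (\sum_(k | phi k == A) law X k) * c A by [].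
by rewrite mulr_suml; apply: eq_bigr => k /eqP ->; rewrite mulrC.
Qed.

End FixedVariable.
End FiniteValuedRandomVariables.

Lemma inv_expR1_le_pow_1Binv (R : realType) (n : nat) :
  (expR 1)^-1 <= (1 - n.+1%:R^-1 : R) ^+ n.
Proof.
rewrite -div1r ler_pdivrMr ?expR_gt0 //.
case: n => [|n]; first by rewrite expr0 mul1r -expR0 ler_expR.
have pow_le_e : (1 + n.+1%:R^-1 : R) ^+ n.+1 <= expR 1.
  have -> : expR 1 = expR n.+1%:R^-1 ^+ n.+1 :> R.
    by rewrite -expRM_natl mulfV ?pnatr_eq0.
  by apply: lerXn2r; rewrite ?nnegrE ?expR_ge0 ?expR_ge1Dx //.
have n_gt0 : (0 : R) < n.+1%:R by rewrite ltr0n.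
have inverse : (1 - n.+2%:R^-1 : R) * (1 + n.+1%:R^-1) = 1.
  by rewrite -[n.+2]addn1 natrD; field; lra.
apply: le_trans (ler_wpM2l _ pow_le_e).
  by rewrite -exprMn inverse expr1n.
by rewrite exprn_ge0 // subr_ge0 invf_le1 ?ler1n.
Qed.

Lemma lower_bound_of_recurrence (R : realFieldType) (a : nat -> R)
    (t rho v : R) (n : nat) :
  0 <= rho -> 0 <= t <= 1 - rho -> 0 <= v -> 0 <= a 0%N ->
  (forall j, (j <= n)%N -> t * (rho ^+ j * v - a j) <= a j.+1 - a j) ->
  n.+1%:R * t * rho ^+ n * v <= a n.+1.
Proof.
move=> rho_ge0 /andP[t_ge0 t_le] v_ge0 a0_ge0; elim: n => [|n IH] step.
  have := step 0%N (leqnn 0); rewrite expr0 mul1r mulr1.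
  have : 0 <= (1 - t) * a 0%N by rewrite mulr_ge0 //; lra.
  nra.
have {}IH := IH (fun j le_jn => step j (leqW le_jn)).
have := step n.+1 (leqnn _); rewrite exprS.
set x := rho ^+ n in IH *; have x_ge0 : 0 <= x by rewrite exprn_ge0.
(* a_{n+2} >= (1 - t) a_{n+1} + t rho x v, and 1 - t >= rho *)
have slack : 0 <= (1 - t - rho) * (n.+1%:R * t * x * v).
  by apply: mulr_ge0; [lra | rewrite !mulr_ge0].
have scaled_IH : 0 <= (1 - t) * (a n.+1 - n.+1%:R * t * x * v).
  by rewrite mulr_ge0 ?subr_ge0 //; lra.
rewrite -natr1; nra.
Qed.

Lemma inv_e_bound_of_recurrence (R : realType) (a : nat -> R) (r : nat)
    (alpha v : R) :
  (0 < r)%N -> 0 <= alpha <= 1 -> (forall j, 0 <= a j) ->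
  (forall j, (j < r)%N ->
     alpha / r%:R * ((1 - r%:R^-1) ^+ j * v - a j) <= a j.+1 - a j) ->
  alpha / expR 1 * v <= a r.
Proof.
case: r => // n _ /andP[alpha_ge0 alpha_le1] a_ge0 step.
have [v_ge0|v_lt0] := leP 0 v; last first.
  apply: le_trans (a_ge0 _); apply: mulr_ge0_le0; last exact: ltW.
  by rewrite divr_ge0 ?expR_ge0.
set rho := 1 - n.+1%:R^-1 in step; set t := alpha / n.+1%:R in step.
have rho_ge0 : 0 <= rho by rewrite subr_ge0 invf_le1 ?ler1n.
have t_bounds : 0 <= t <= 1 - rho.
  rewrite /rho opprB addrC subrK /t divr_ge0 //= -[leRHS]mul1r.
  by rewrite ler_wpM2r // invr_ge0.
have := lower_bound_of_recurrence rho_ge0 t_bounds v_ge0 (a_ge0 0%N) step.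
rewrite /t mulrCA mulfV ?pnatr_eq0 // mulr1; apply: le_trans.
by rewrite ler_wpM2r // ler_wpM2l // inv_expR1_le_pow_1Binv.
Qed.

Section BLITS.
Variables (R : realType) (N : finType) (f : {set N} -> R) (r : nat).
Variables (alpha vstar : R) (d : measure_display) (Omega : measurableType d).
Variables (P : probability Omega R) (T : nat -> Omega -> {set N}).
Hypothesis measurable_T : forall i, measurable_fibers (T i).

Lemma measurable_fibers_blits_sol j : measurable_fibers (blits_sol T j).
Proof.
elim: j => [|j IH]; first exact: measurable_fibers_cst.
exact: (measurable_fibers_comp (fun k => k.1 :|: k.2)
         (measurable_fibers_pair IH (measurable_T j.+1))).
Qed.

Definition expected_blits_value j := \sum_A f A * law P (blits_sol T j) A.

Lemma integral_blits_sol j :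
  (\int[P]_w (f (blits_sol T j w))%:E = (expected_blits_value j)%:E)%E.
Proof. exact: (integral_fin_valued P (measurable_fibers_blits_sol j)). Qed.

Lemma expected_blits_value_ge0 j :
  (forall S, 0 <= f S) -> 0 <= expected_blits_value j.
Proof.
move=> f_ge0; apply: sumr_ge0 => A _.
by rewrite mulr_ge0 // fine_ge0 // measure_ge0.
Qed.

Hypothesis conditional_gain : forall i, (1 <= i <= r)%N -> forall A : {set N},
  (P [set w | blits_sol T i.-1 w = A] *
     (alpha / r%:R * ((1 - r%:R^-1) ^+ i.-1 * vstar - f A))%:E <=
   \int[P]_(w in [set w | blits_sol T i.-1 w = A])
     (marginal f (blits_sol T i.-1 w) (T i w))%:E)%E.

Lemma expected_blits_value_increment j : (j < r)%N ->
  alpha / r%:R * ((1 - r%:R^-1) ^+ j * vstar - expected_blits_value j) <=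
  expected_blits_value j.+1 - expected_blits_value j.
Proof.
move=> lt_jr; pose X w := (blits_sol T j w, T j.+1 w).
have mX : measurable_fibers X.
  exact/measurable_fibers_pair/measurable_T/measurable_fibers_blits_sol.
have E_now : expected_blits_value j = \sum_k f k.1 * law P X k.
  apply: EFin_inj; rewrite -integral_blits_sol.
  exact: (integral_fin_valued P mX (fun k => f k.1)).
have E_next : expected_blits_value j.+1 = \sum_k f (k.1 :|: k.2) * law P X k.
  apply: EFin_inj; rewrite -integral_blits_sol.
  exact: (integral_fin_valued P mX (fun k => f (k.1 :|: k.2))).
have gain := @conditional_gain j.+1 lt_jr.
set t := alpha / r%:R in gain *; set rho := 1 - r%:R^-1 in gain *.
have lhs : \sum_k t * (rho ^+ j * vstar - f k.1) * law P X k =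
            t * (rho ^+ j * vstar - \sum_k f k.1 * law P X k).
  under eq_bigr do rewrite -mulrA mulrBl.
  by rewrite -mulr_sumr sumrB -mulr_sumr sum_law // mulr1.
have rhs : \sum_k marginal f k.1 k.2 * law P X k =
           expected_blits_value j.+1 - expected_blits_value j.
  by rewrite E_now E_next -sumrB; apply: eq_bigr => k _; rewrite mulrBl.
rewrite -rhs E_now -lhs.
exact: (le_expectation_of_conditional mX (phi := fst)
  (c := fun A => t * (rho ^+ j * vstar - f A))
  (m := fun k => marginal f k.1 k.2)).
Qed.

End BLITS.

Theorem lemma2 (R : realType) (N : finType) (f : {set N} -> R) (r : nat)
  (alpha vstar : R) (d : measure_display) (Omega : measurableType d)
  (P : probability Omega R) (T : nat -> Omega -> {set N}) :
  (forall S : {set N}, 0 <= f S) ->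
  submodular f ->
  (0 < r)%N ->
  0 <= alpha <= 1 ->
  (forall (i : nat) (B : {set N}), measurable (T i @^-1` [set B])) ->
  (forall i : nat, (1 <= i <= r)%N -> forall A : {set N},
     (P [set w | blits_sol T i.-1 w = A] *
        (alpha / r%:R * ((1 - r%:R^-1) ^+ i.-1 * vstar - f A))%:E <=
      \int[P]_(w in [set w | blits_sol T i.-1 w = A])
         (marginal f (blits_sol T i.-1 w) (T i w))%:E)%E) ->
  ((alpha / expR 1 * vstar)%:E <= \int[P]_w (f (blits_sol T r w))%:E)%E.
Proof.
(* Submodularity is what makes SIEVE achieve the per-round gain. *)
move=> f_ge0 _ r_gt0 alpha01 measurable_T conditional_gain.
rewrite integral_blits_sol // lee_fin.
apply: inv_e_bound_of_recurrence => // j.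
  exact: expected_blits_value_ge0.
exact: expected_blits_value_increment.
Qed.
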